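(* Let $P$ be the uniform distribution on $[0,1]$ and $\beta=\{\frac14,\frac12\}$. The conditional optimal set of six-points for $P$ with respect to $\beta$ is $\alpha_6=\{\frac1{12},\frac14,\frac38,\frac12,\frac7{10},\frac9{10}\}$, with $V_6=\frac{1777}{691200}$ ($\approx0.00257089$).
   Context: For a Borel probability measure $P$ on $\mathbb{R}$ and finite $\beta$ with $\mathrm{card}(\beta)=r$, for $n\ge r$, $V_n=\inf\{\int\min_{a\in\alpha\cup\beta}(x-a)^2dP(x):\mathrm{card}(\alpha)\le n-r\}$; a set $\alpha\cup\beta$ attaining the infimum, with each point of $\beta$ having a Voronoi region of positive $P$-measure, is a conditional optimal set of $n$-points with respect to $\beta$. *)

From Stdlib Require Import Reals List.
From Coquelicot Require Import Coquelicot.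
Import ListNotations.
Open Scope R_scope.

(* min_{a in S} (x - a)^2 for a nonempty finite set S given as a list
   (junk value 0 for the empty list, never used). *)
Fixpoint mind2 (x : R) (S : list R) : R :=
  match S with
  | [] => 0
  | [a] => (x - a) ^ 2
  | a :: s => Rmin ((x - a) ^ 2) (mind2 x s)
  end.

Definition distortion (S : list R) : R := RInt (fun x => mind2 x S) 0 1.

(* Finite sets alpha are lists; a list of length <= n - r represents exactly
   the sets of cardinality <= n - r. *)
Definition Vn (n : nat) (beta : list R) : Rbar :=
  Glb_Rbar (fun v => exists alpha : list R,
    (length alpha <= n - length beta)%nat /\ v = distortion (alpha ++ beta)).

Definition voronoi_prob (b : R) (S : list R) : R :=
  RInt (fun x => if Rle_dec ((x - b) ^ 2) (mind2 x S) then 1 else 0) 0 1.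

Definition same_set (S T : list R) : Prop := forall x, In x S <-> In x T.

Definition cond_optimal_set (n : nat) (beta S : list R) : Prop :=
  (exists alpha : list R,
      (length alpha <= n - length beta)%nat /\ same_set S (alpha ++ beta)) /\
  Finite (distortion S) = Vn n beta /\
  (forall b, In b beta -> voronoi_prob b S > 0).

(* Cutting [0, 1] at the prescribed points 1/4 and 1/2 splits the error into three segment
   errors.  On a segment of length L, a set with points at both ends and n further points has
   error at least L^3 / (12 (n + 1)^2), and a set with a point at one end and n further points
   at least L^3 / (12 (n + 1/2)^2): split at an interior point and use the subadditivity of
   (L, k) |-> L^3 / k^2.  If the four free points are distributed as (m1, m2, m3) over
   [0, 1/4], [1/4, 1/2] and [1/2, 1], these bounds add up to at least 1777/691200, with
   equality only for (1, 1, 2); equality then forces each segment to be quantized optimally,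
   which pins the free points to 1/12, 3/8, 7/10 and 9/10. *)

From Stdlib Require Import Reals List Lra Lia Psatz Classical Wf_nat.
From Coquelicot Require Import Coquelicot.
Import ListNotations.
Open Scope R_scope.

Lemma In_not_nil (p : R) S : In p S -> S <> [].
Proof. destruct S; [contradiction | discriminate]. Qed.

Lemma continuous_Rmin (f g : R -> R) x : continuous f x -> continuous g x ->
  continuous (fun y => Rmin (f y) (g y)) x.
Proof.
  intros Hf%continuity_pt_filterlim Hg%continuity_pt_filterlim.
  apply continuity_pt_filterlim.
  apply (continuity_pt_ext (fun y => (f y + g y - Rabs (f y - g y)) / 2)).
  { intros y. unfold Rmin, Rabs. destruct Rle_dec, Rcase_abs; lra. }
  apply continuity_pt_div; [| apply continuity_pt_const; intros ? ?; reflexivity | lra].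
  apply continuity_pt_minus; [apply continuity_pt_plus; assumption|].
  apply (continuity_pt_comp (fun y => f y - g y) Rabs); [apply continuity_pt_minus; assumption|].
  apply Rcontinuity_abs.
Qed.

Lemma continuous_sq_dist a x : continuous (fun y => (y - a) ^ 2) x.
Proof. apply (@ex_derive_continuous R_AbsRing R_NormedModule). auto_derive. trivial. Qed.

Lemma continuous_mind2 S x : continuous (fun y => mind2 y S) x.
Proof.
  induction S as [|a [|b s] IH].
  - apply continuous_const.
  - apply continuous_sq_dist.
  - apply continuous_Rmin; [apply continuous_sq_dist | exact IH].
Qed.

Lemma ex_RInt_mind2 S u v : ex_RInt (fun x => mind2 x S) u v.
Proof. apply (@ex_RInt_continuous R_CompleteNormedModule). intros; apply continuous_mind2. Qed.

Lemma mind2_le_sq x S a : In a S -> mind2 x S <= (x - a) ^ 2.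
Proof.
  induction S as [|c [|d s] IH]; simpl; intros Ha.
  - contradiction.
  - destruct Ha as [<-|[]]; lra.
  - destruct Ha as [<-|Ha]; [apply Rmin_l|].
    eapply Rle_trans; [apply Rmin_r | apply IH, Ha].
Qed.

Lemma mind2_glb x S m : S <> [] -> (forall a, In a S -> m <= (x - a) ^ 2) -> m <= mind2 x S.
Proof.
  induction S as [|c [|d s] IH]; intros Hne H; [congruence| |].
  - apply H; left; reflexivity.
  - apply Rmin_glb; [apply H; left; reflexivity|].
    apply IH; [congruence|]. intros a Ha; apply H; right; exact Ha.
Qed.

Lemma mind2_dominated x S T : S <> [] ->
  (forall a, In a S -> exists b, In b T /\ (x - b) ^ 2 <= (x - a) ^ 2) ->
  mind2 x T <= mind2 x S.
Proof.
  intros Hne H. apply mind2_glb; [exact Hne|]. intros a Ha.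
  destruct (H a Ha) as [b [Hb Hab]].
  eapply Rle_trans; [apply mind2_le_sq, Hb | exact Hab].
Qed.

Lemma mind2_incl x S T : S <> [] -> incl S T -> mind2 x T <= mind2 x S.
Proof.
  intros Hne H. apply mind2_dominated; [exact Hne|].
  intros a Ha; exists a; split; [apply H, Ha | lra].
Qed.

Lemma mind2_same_set x S T : S <> [] -> same_set S T -> mind2 x S = mind2 x T.
Proof.
  intros Hne H.
  assert (T <> []).
  { destruct S as [|a s]; [congruence|]. apply (In_not_nil a), H; left; reflexivity. }
  apply Rle_antisym; apply mind2_incl; auto; intros a; apply H.
Qed.

Lemma mind2_opp x S : mind2 (- x) S = mind2 x (map Ropp S).
Proof.
  induction S as [|a [|b s] IH]; [reflexivity | simpl; ring |].
  change (Rmin ((- x - a) ^ 2) (mind2 (- x) (b :: s))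
    = Rmin ((x - - a) ^ 2) (mind2 x (map Ropp (b :: s)))).
  rewrite IH; f_equal; ring.
Qed.

Notation local_distortion S u v := (RInt (fun x => mind2 x S) u v).

Lemma RInt_sq_dist c u v : RInt (fun x => (x - c) ^ 2) u v = ((v - c) ^ 3 - (u - c) ^ 3) / 3.
Proof.
  apply is_RInt_unique.
  replace (((v - c) ^ 3 - (u - c) ^ 3) / 3)
    with (minus ((v - c) ^ 3 / 3) ((u - c) ^ 3 / 3))
    by (unfold minus, plus, opp; simpl; field).
  apply (@is_RInt_derive R_CompleteNormedModule (fun x => (x - c) ^ 3 / 3)).
  - intros x _. auto_derive; [trivial | field].
  - intros x _. apply continuous_sq_dist.
Qed.

Lemma local_distortion_le S T u v : u <= v ->
  (forall x, u < x < v -> mind2 x T <= mind2 x S) ->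
  local_distortion T u v <= local_distortion S u v.
Proof. intros. apply RInt_le; auto using ex_RInt_mind2. Qed.

Lemma local_distortion_ge_sq S c u v : u <= v ->
  (forall x, u < x < v -> (x - c) ^ 2 <= mind2 x S) ->
  ((v - c) ^ 3 - (u - c) ^ 3) / 3 <= local_distortion S u v.
Proof.
  intros Huv H. rewrite <- RInt_sq_dist.
  apply RInt_le; auto using ex_RInt_mind2.
  apply (@ex_RInt_continuous R_CompleteNormedModule); intros; apply continuous_sq_dist.
Qed.

Lemma local_distortion_Chasles S u a v :
  local_distortion S u v = local_distortion S u a + local_distortion S a v.
Proof. symmetry. apply (@RInt_Chasles R_CompleteNormedModule); apply ex_RInt_mind2. Qed.

Lemma local_distortion_same_set S T u v : S <> [] -> same_set S T ->
  local_distortion S u v = local_distortion T u v.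
Proof. intros. apply RInt_ext. intros. apply mind2_same_set; assumption. Qed.

Lemma local_distortion_opp S u v :
  local_distortion S u v = local_distortion (map Ropp S) (- v) (- u).
Proof.
  symmetry.
  replace (- v) with (-1 * v + 0) by ring. replace (- u) with (-1 * u + 0) by ring.
  rewrite <- (@RInt_comp_lin R_CompleteNormedModule) by apply ex_RInt_mind2.
  rewrite (RInt_ext _ (fun y => opp (mind2 y S))).
  - rewrite (@RInt_opp R_CompleteNormedModule) by apply ex_RInt_mind2.
    apply (@opp_RInt_swap R_CompleteNormedModule), ex_RInt_mind2.
  - intros y _. replace (-1 * y + 0) with (- y) by ring.
    rewrite mind2_opp, map_map, (map_ext _ id Ropp_involutive), map_id.
    unfold scal; simpl; unfold mult, opp; simpl. ring.
Qed.

Definition below (a : R) (S : list R) : list R :=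
  filter (fun p => if Rlt_dec p a then true else false) S.

Definition above (a : R) (S : list R) : list R :=
  filter (fun p => if Rlt_dec a p then true else false) S.

Lemma In_below p a S : In p (below a S) <-> In p S /\ p < a.
Proof. unfold below. rewrite filter_In. destruct Rlt_dec; intuition congruence. Qed.

Lemma In_above p a S : In p (above a S) <-> In p S /\ a < p.
Proof. unfold above. rewrite filter_In. destruct Rlt_dec; intuition congruence. Qed.

Lemma below_cons_lt p a S : p < a -> below a (p :: S) = p :: below a S.
Proof. intros H. unfold below; simpl. destruct Rlt_dec; [reflexivity | lra]. Qed.

Lemma above_cons_le p a S : p <= a -> above a (p :: S) = above a S.
Proof. intros H. unfold above; simpl. destruct Rlt_dec; [lra | reflexivity]. Qed.

Lemma length_below_above_le a S : (length (below a S) + length (above a S) <= length S)%nat.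
Proof.
  induction S as [|p S IH]; [reflexivity|].
  unfold below, above in *; simpl.
  destruct (Rlt_dec p a), (Rlt_dec a p); simpl; try lra; lia.
Qed.

Lemma length_below_above a S : In a S -> (length (below a S) + length (above a S) < length S)%nat.
Proof.
  induction S as [|p S IH]; intros Ha; [contradiction|].
  assert (Hle := length_below_above_le a S).
  unfold below, above in *; simpl.
  destruct Ha as [->|Ha].
  - destruct (Rlt_dec a a); [lra|]. simpl; lia.
  - specialize (IH Ha). destruct (Rlt_dec p a), (Rlt_dec a p); simpl; try lra; lia.
Qed.

Lemma length_pos_of_In (p : R) S : In p S -> (0 < length S)%nat.
Proof. destruct S; [contradiction | simpl; lia]. Qed.

Lemma outside_of_no_point_between S u v : ~ (exists a, In a S /\ u < a < v) ->
  forall p, In p S -> p <= u \/ v <= p.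
Proof.
  intros Hgap p Hp. destruct (Rle_dec p u); [left; lra|]. right.
  destruct (Rle_dec v p); [lra|]. exfalso. apply Hgap. exists p. split; [exact Hp | lra].
Qed.

Ltac compute_below_above := unfold below, above; simpl; repeat destruct Rlt_dec; lra || reflexivity.

Lemma mind2_below_le x a S : In a S -> x <= a -> mind2 x (a :: below a S) <= mind2 x S.
Proof.
  intros Ha Hx. apply mind2_dominated; [apply (In_not_nil _ _ Ha)|].
  intros p Hp. destruct (Rlt_dec p a) as [Hpa|Hpa].
  - exists p. split; [right; apply In_below; auto | lra].
  - exists a. split; [left; reflexivity | nra].
Qed.

Lemma mind2_above_le x a S : In a S -> a <= x -> mind2 x (a :: above a S) <= mind2 x S.
Proof.
  intros Ha Hx. apply mind2_dominated; [apply (In_not_nil _ _ Ha)|].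
  intros p Hp. destruct (Rlt_dec a p) as [Hpa|Hpa].
  - exists p. split; [right; apply In_above; auto | lra].
  - exists a. split; [left; reflexivity | nra].
Qed.

Lemma local_distortion_split S u a v : In a S -> u <= a <= v ->
  local_distortion (a :: below a S) u a + local_distortion (a :: above a S) a v
  <= local_distortion S u v.
Proof.
  intros Ha Huav. rewrite (local_distortion_Chasles S u a v).
  apply Rplus_le_compat; apply local_distortion_le; try lra; intros x Hx.
  - apply mind2_below_le; [exact Ha | lra].
  - apply mind2_above_le; [exact Ha | lra].
Qed.

(* [cell_error L k] is the error of the Lebesgue measure on an interval of length [L] cut into
   [k] equal cells, each quantized at its centre; a cell at a free end of the interval,
   quantized at its inner endpoint, counts as half a cell. *)
Definition cell_error (L k : R) : R := L ^ 3 / (12 * k ^ 2).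

Lemma cell_error_antitone L k k' : 0 <= L -> 0 < k <= k' -> cell_error L k' <= cell_error L k.
Proof.
  intros HL Hk. unfold cell_error, Rdiv. apply Rmult_le_compat_l; [apply pow_le; lra|].
  apply Rinv_le_contravar; [nra|]. nra.
Qed.

(* [(L, k) |-> L^3 / k^2] is convex and positively homogeneous, hence subadditive. *)
Lemma cell_error_subadditive x y p q : 0 <= x -> 0 <= y -> 0 < p -> 0 < q ->
  cell_error (x + y) (p + q) <= cell_error x p + cell_error y q.
Proof.
  intros Hx Hy Hp Hq. unfold cell_error.
  set (s := x / p). set (t := y / q).
  assert (Hs : 0 <= s) by (unfold s; apply Rdiv_le_0_compat; lra).
  assert (Ht : 0 <= t) by (unfold t; apply Rdiv_le_0_compat; lra).
  replace x with (p * s) by (unfold s; field; lra).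
  replace y with (q * t) by (unfold t; field; lra).
  assert (E : (p * s) ^ 3 / (12 * p ^ 2) + (q * t) ^ 3 / (12 * q ^ 2)
              - (p * s + q * t) ^ 3 / (12 * (p + q) ^ 2)
              = p * q * (s - t) ^ 2 * ((2 * p + q) * s + (p + 2 * q) * t) / (12 * (p + q) ^ 2))
    by (field; lra).
  assert (0 <= p * q * (s - t) ^ 2 * ((2 * p + q) * s + (p + 2 * q) * t) / (12 * (p + q) ^ 2)).
  { apply Rdiv_le_0_compat; [|nra].
    apply Rmult_le_pos; [apply Rmult_le_pos; [nra | apply pow2_ge_0] | nra]. }
  lra.
Qed.

Lemma local_distortion_ge_gap S u v : S <> [] -> u <= v ->
  (forall p, In p S -> p <= u \/ v <= p) -> cell_error (v - u) 1 <= local_distortion S u v.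
Proof.
  intros Hne Huv Hout. set (m := (u + v) / 2).
  rewrite (local_distortion_Chasles S u m v).
  assert (Hl : ((m - u) ^ 3 - (u - u) ^ 3) / 3 <= local_distortion S u m).
  { apply local_distortion_ge_sq; [unfold m; lra|]. intros x Hx. apply mind2_glb; [exact Hne|].
    intros p Hp. unfold m in Hx. destruct (Hout p Hp); nra. }
  assert (Hr : ((v - v) ^ 3 - (m - v) ^ 3) / 3 <= local_distortion S m v).
  { apply local_distortion_ge_sq; [unfold m; lra|]. intros x Hx. apply mind2_glb; [exact Hne|].
    intros p Hp. unfold m in Hx. destruct (Hout p Hp); nra. }
  replace (cell_error (v - u) 1)
    with (((m - u) ^ 3 - (u - u) ^ 3) / 3 + ((v - v) ^ 3 - (m - v) ^ 3) / 3)
    by (unfold cell_error, m; field).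
  lra.
Qed.

Lemma local_distortion_ge_left_gap S u v : S <> [] -> u <= v ->
  (forall p, In p S -> p <= u) -> cell_error (v - u) (/ 2) <= local_distortion S u v.
Proof.
  intros Hne Huv Hle.
  replace (cell_error (v - u) (/ 2)) with (((v - u) ^ 3 - (u - u) ^ 3) / 3)
    by (unfold cell_error; field).
  apply local_distortion_ge_sq; [exact Huv|]. intros x Hx. apply mind2_glb; [exact Hne|].
  intros p Hp. specialize (Hle p Hp). nra.
Qed.

Lemma local_distortion_ge_split S u a v k1 k2 k : In a S -> u < a < v ->
  0 < k1 -> 0 < k2 -> k1 + k2 <= k ->
  cell_error (a - u) k1 <= local_distortion (a :: below a S) u a ->
  cell_error (v - a) k2 <= local_distortion (a :: above a S) a v ->
  cell_error (v - u) k <= local_distortion S u v.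
Proof.
  intros Ha Hav Hk1 Hk2 Hk B1 B2.
  assert (Hsub := cell_error_subadditive (a - u) (v - a) k1 k2 ltac:(lra) ltac:(lra) Hk1 Hk2).
  replace (a - u + (v - a)) with (v - u) in Hsub by ring.
  assert (Hmono := cell_error_antitone (v - u) (k1 + k2) k ltac:(lra) ltac:(lra)).
  assert (Hsplit := local_distortion_split S u a v Ha ltac:(lra)).
  lra.
Qed.

Lemma le_INR_sum n1 n2 n : (n1 + n2 + 1 <= n)%nat -> INR n1 + INR n2 + 1 <= INR n.
Proof. intros H. apply le_INR in H. rewrite !plus_INR in H. exact H. Qed.

Lemma local_distortion_ge_inner n : forall S u v, u < v -> In u S -> In v S ->
  (length S <= n + 2)%nat -> cell_error (v - u) (INR n + 1) <= local_distortion S u v.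
Proof.
  induction n as [n IH] using lt_wf_ind. intros S u v Huv Hu Hv Hlen.
  pose proof (pos_INR n).
  destruct (classic (exists a, In a S /\ u < a < v)) as [[a [Ha Hav]]|Hgap].
  - assert (Hub : In u (below a S)) by (apply In_below; split; [exact Hu | lra]).
    assert (Hva : In v (above a S)) by (apply In_above; split; [exact Hv | lra]).
    pose proof (length_below_above a S Ha).
    pose proof (length_pos_of_In _ _ Hub). pose proof (length_pos_of_In _ _ Hva).
    set (n1 := (length (below a S) - 1)%nat). set (n2 := (length (above a S) - 1)%nat).
    pose proof (pos_INR n1). pose proof (pos_INR n2).
    assert (Hn := le_INR_sum n1 n2 n ltac:(lia)).
    apply (local_distortion_ge_split S u a v (INR n1 + 1) (INR n2 + 1)); [exact Ha | lra.. | |].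
    + apply IH; [lia | lra | right; exact Hub | left; reflexivity | simpl; lia].
    + apply IH; [lia | lra | left; reflexivity | right; exact Hva | simpl; lia].
  - apply Rle_trans with (cell_error (v - u) 1); [apply cell_error_antitone; lra|].
    apply local_distortion_ge_gap; [apply (In_not_nil _ _ Hu) | lra |].
    apply outside_of_no_point_between, Hgap.
Qed.

Lemma local_distortion_ge_left n : forall S u v, u < v -> In u S ->
  (length S <= n + 1)%nat -> cell_error (v - u) (INR n + / 2) <= local_distortion S u v.
Proof.
  induction n as [n IH] using lt_wf_ind. intros S u v Huv Hu Hlen.
  pose proof (pos_INR n).
  destruct (classic (exists a, In a S /\ u < a < v)) as [[a [Ha Hav]]|Hgap].
  - assert (Hub : In u (below a S)) by (apply In_below; split; [exact Hu | lra]).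
    pose proof (length_below_above a S Ha). pose proof (length_pos_of_In _ _ Hub).
    set (n1 := (length (below a S) - 1)%nat). set (n2 := length (above a S)).
    pose proof (pos_INR n1). pose proof (pos_INR n2).
    assert (Hn := le_INR_sum n1 n2 n ltac:(lia)).
    apply (local_distortion_ge_split S u a v (INR n1 + 1) (INR n2 + / 2));
      [exact Ha | lra | lra | lra | lra | |].
    + apply local_distortion_ge_inner; [lra | right; exact Hub | left; reflexivity | simpl; lia].
    + apply IH; [lia | lra | left; reflexivity | simpl; lia].
  - assert (Hout := outside_of_no_point_between S u v Hgap).
    destruct (classic (exists p, In p S /\ v <= p)) as [[p [Hp Hvp]]|Hnone].
    + assert (Hup : In u (below p S)) by (apply In_below; split; [exact Hu | lra]).
      pose proof (length_below_above p S Hp). pose proof (length_pos_of_In _ _ Hup).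
      assert (Hn : 1 <= INR n) by (apply (le_INR 1); lia).
      apply Rle_trans with (cell_error (v - u) 1); [apply cell_error_antitone; lra|].
      apply local_distortion_ge_gap; [apply (In_not_nil _ _ Hu) | lra | exact Hout].
    + apply Rle_trans with (cell_error (v - u) (/ 2)); [apply cell_error_antitone; lra|].
      apply local_distortion_ge_left_gap; [apply (In_not_nil _ _ Hu) | lra |].
      intros p Hp. destruct (Hout p Hp) as [Hpu|Hvp]; [exact Hpu|].
      exfalso. apply Hnone. exists p. split; assumption.
Qed.

Lemma local_distortion_ge_right n S u v : u < v -> In v S ->
  (length S <= n + 1)%nat -> cell_error (v - u) (INR n + / 2) <= local_distortion S u v.
Proof.
  intros Huv Hv Hlen. rewrite local_distortion_opp. replace (v - u) with (- u - - v) by ring.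
  apply local_distortion_ge_left; [lra | apply in_map, Hv | rewrite length_map; exact Hlen].
Qed.

Lemma eq_of_sq_mul_nonpos t t0 c : 0 < c -> (t - t0) ^ 2 * c <= 0 -> t = t0.
Proof.
  intros Hc H. assert (Hsq : (t - t0) ^ 2 <= 0).
  { apply (Rmult_le_reg_r c); [exact Hc | lra]. }
  nra.
Qed.

Lemma one_point_left_tight u d v : u < v -> u < d ->
  local_distortion [u; d] u v <= cell_error (v - u) (3 / 2) -> d = u + 2 * (v - u) / 3.
Proof.
  intros Huv Hud H. assert (HL : 0 < (v - u) ^ 3) by (apply pow_lt; lra).
  destruct (Rlt_le_dec d v) as [Hdv|Hvd].
  - assert (Hsplit := local_distortion_split [u; d] u d v ltac:(simpl; auto) ltac:(lra)).
    assert (Eb : below d [u; d] = [u]) by compute_below_above.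
    assert (Ea : above d [u; d] = []) by compute_below_above.
    rewrite Eb, Ea in Hsplit.
    assert (B1 := local_distortion_ge_inner 0 [d; u] u d ltac:(lra) ltac:(simpl; auto)
                    ltac:(simpl; auto) ltac:(simpl; lia)).
    assert (B2 := local_distortion_ge_left 0 [d] d v
                    ltac:(lra) ltac:(simpl; auto) ltac:(simpl; lia)).
    unfold cell_error in *. simpl INR in *.
    assert (E : (d - u) ^ 3 / (12 * (0 + 1) ^ 2) + (v - d) ^ 3 / (12 * (0 + / 2) ^ 2)
                - (v - u) ^ 3 / (12 * (3 / 2) ^ 2)
                = (d - (u + 2 * (v - u) / 3)) ^ 2 * (2 * (v - u) / 3 - (d - u) / 4)) by field.
    apply (eq_of_sq_mul_nonpos _ _ (2 * (v - u) / 3 - (d - u) / 4)); lra.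
  - exfalso.
    assert (B := local_distortion_ge_gap [u; d] u v ltac:(discriminate) ltac:(lra)
                   ltac:(intros p [<-|[<-|[]]]; lra)).
    unfold cell_error in *. lra.
Qed.

Lemma one_point_right_tight u a v : u < v -> a < v ->
  local_distortion [v; a] u v <= cell_error (v - u) (3 / 2) -> a = u + (v - u) / 3.
Proof.
  intros Huv Hav H. rewrite local_distortion_opp in H. simpl map in H.
  replace (v - u) with (- u - - v) in H by ring.
  apply one_point_left_tight in H; lra.
Qed.

Lemma midpoint_tight u b v : u < b < v ->
  local_distortion [u; b; v] u v <= cell_error (v - u) 2 -> b = (u + v) / 2.
Proof.
  intros Hb H.
  assert (Hsplit := local_distortion_split [u; b; v] u b v ltac:(simpl; auto) ltac:(lra)).
  assert (Eb : below b [u; b; v] = [u]) by compute_below_above.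
  assert (Ea : above b [u; b; v] = [v]) by compute_below_above.
  rewrite Eb, Ea in Hsplit.
  assert (B1 := local_distortion_ge_inner 0 [b; u] u b ltac:(lra) ltac:(simpl; auto)
                  ltac:(simpl; auto) ltac:(simpl; lia)).
  assert (B2 := local_distortion_ge_inner 0 [b; v] b v ltac:(lra) ltac:(simpl; auto)
                  ltac:(simpl; auto) ltac:(simpl; lia)).
  unfold cell_error in *. simpl INR in *.
  assert (E : (b - u) ^ 3 / (12 * (0 + 1) ^ 2) + (v - b) ^ 3 / (12 * (0 + 1) ^ 2)
              - (v - u) ^ 3 / (12 * 2 ^ 2) = (b - (u + v) / 2) ^ 2 * ((v - u) / 4)) by field.
  apply (eq_of_sq_mul_nonpos _ _ ((v - u) / 4)); lra.
Qed.

Lemma ordered_two_points_left_tight u c d v : u < v -> u < c < d ->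
  local_distortion [u; c; d] u v <= cell_error (v - u) (5 / 2) ->
  c = u + 2 * (v - u) / 5 /\ d = u + 4 * (v - u) / 5.
Proof.
  intros Huv Hcd H. assert (HL : 0 < (v - u) ^ 3) by (apply pow_lt; lra).
  destruct (Rlt_le_dec c v) as [Hcv|Hvc].
  - assert (Hsplit := local_distortion_split [u; c; d] u c v ltac:(simpl; auto) ltac:(lra)).
    assert (Eb : below c [u; c; d] = [u]) by compute_below_above.
    assert (Ea : above c [u; c; d] = [d]) by compute_below_above.
    rewrite Eb, Ea in Hsplit.
    assert (B1 := local_distortion_ge_inner 0 [c; u] u c ltac:(lra) ltac:(simpl; auto)
                    ltac:(simpl; auto) ltac:(simpl; lia)).
    assert (B2 := local_distortion_ge_left 1 [c; d] c v
                    ltac:(lra) ltac:(simpl; auto) ltac:(simpl; lia)).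
    unfold cell_error in B1, B2, H. simpl INR in B1, B2.
    assert (E : (c - u) ^ 3 / (12 * (0 + 1) ^ 2) + (v - c) ^ 3 / (12 * (1 + / 2) ^ 2)
                - (v - u) ^ 3 / (12 * (5 / 2) ^ 2)
                = (c - (u + 2 * (v - u) / 5)) ^ 2 * (5 * (c - u) / 108 + 4 * (v - u) / 27))
      by field.
    assert (Hc : c = u + 2 * (v - u) / 5).
    { apply (eq_of_sq_mul_nonpos _ _ (5 * (c - u) / 108 + 4 * (v - u) / 27)); lra. }
    split; [exact Hc|].
    assert (Hd : d = c + 2 * (v - c) / 3).
    { apply one_point_left_tight; [lra | lra |]. unfold cell_error.
      subst c. replace (u + 2 * (v - u) / 5 - u) with (2 * (v - u) / 5) in B1 by ring.
      replace ((v - (u + 2 * (v - u) / 5)) ^ 3 / (12 * (3 / 2) ^ 2))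
        with ((v - u) ^ 3 / (12 * (5 / 2) ^ 2) - (2 * (v - u) / 5) ^ 3 / (12 * (0 + 1) ^ 2))
        by field.
      lra. }
    lra.
  - exfalso.
    assert (B := local_distortion_ge_gap [u; c; d] u v ltac:(discriminate) ltac:(lra)
                   ltac:(intros p [<-|[<-|[<-|[]]]]; lra)).
    unfold cell_error in *. lra.
Qed.

Lemma two_points_left_tight u c d v : u < v -> u < c -> u < d ->
  local_distortion [u; c; d] u v <= cell_error (v - u) (5 / 2) ->
  (c = u + 2 * (v - u) / 5 /\ d = u + 4 * (v - u) / 5) \/
  (c = u + 4 * (v - u) / 5 /\ d = u + 2 * (v - u) / 5).
Proof.
  intros Huv Hc Hd H. destruct (Rtotal_order c d) as [Hcd|[<-|Hdc]].
  - left. apply ordered_two_points_left_tight; [lra | lra | exact H].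
  - exfalso. assert (HL : 0 < (v - u) ^ 3) by (apply pow_lt; lra).
    rewrite (local_distortion_same_set _ [u; c]) in H by (discriminate || (intros x; simpl; tauto)).
    assert (B := local_distortion_ge_left 1 [u; c] u v Huv ltac:(simpl; auto) ltac:(simpl; lia)).
    unfold cell_error in *. simpl INR in B. lra.
  - right.
    rewrite (local_distortion_same_set _ [u; d; c]) in H
      by (discriminate || (intros x; simpl; tauto)).
    apply ordered_two_points_left_tight in H; [tauto | lra | lra].
Qed.

Definition alpha6 : list R := [1/12; 1/4; 3/8; 1/2; 7/10; 9/10].

Lemma three_segment_bound_min m1 m2 m3 : (m1 + m2 + m3 <= 4)%nat ->
  let F := cell_error (1/4) (INR m1 + / 2) + cell_error (1/4) (INR m2 + 1)
           + cell_error (1/2) (INR m3 + / 2) in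
  1777/691200 <= F /\ (F <= 1777/691200 -> m1 = 1%nat /\ m2 = 1%nat /\ m3 = 2%nat).
Proof.
  intros Hm F; unfold F, cell_error.
  destruct m1 as [|[|[|[|[|m1]]]]]; destruct m2 as [|[|[|[|[|m2]]]]];
    destruct m3 as [|[|[|[|[|m3]]]]]; try lia; simpl INR; split; try lra; auto.
Qed.

Lemma distortion_ge_segments S : In (1/4) S -> In (1/2) S ->
  local_distortion (1/4 :: below (1/4) S) 0 (1/4)
  + local_distortion (1/2 :: 1/4 :: below (1/2) (above (1/4) S)) (1/4) (1/2)
  + local_distortion (1/2 :: above (1/2) (above (1/4) S)) (1/2) 1 <= distortion S.
Proof.
  intros H14 H12.
  assert (H12' : In (1/2) (1/4 :: above (1/4) S))
    by (right; apply In_above; split; [exact H12 | lra]).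
  assert (Hs1 := local_distortion_split S 0 (1/4) 1 H14 ltac:(lra)).
  assert (Hs2 := local_distortion_split _ (1/4) (1/2) 1 H12' ltac:(lra)).
  rewrite below_cons_lt, above_cons_le in Hs2 by lra.
  unfold distortion. lra.
Qed.

Lemma segments_length S : In (1/4) S -> In (1/2) S ->
  (length (below (1/4) S) + length (below (1/2) (above (1/4) S))
   + length (above (1/2) (above (1/4) S)) + 2 <= length S)%nat.
Proof.
  intros H14 H12.
  assert (H12' : In (1/2) (above (1/4) S)) by (apply In_above; split; [exact H12 | lra]).
  pose proof (length_below_above _ _ H14). pose proof (length_below_above _ _ H12'). lia.
Qed.

Lemma segments_same_set S a b c d : In (1/4) S -> In (1/2) S ->
  below (1/4) S = [a] -> below (1/2) (above (1/4) S) = [b] ->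
  above (1/2) (above (1/4) S) = [c; d] -> same_set S [a; 1/4; b; 1/2; c; d].
Proof.
  intros H14 H12 E1 E2 E3 x. split.
  - intros Hx. destruct (Rtotal_order x (1/4)) as [Hx1|[->|Hx1]]; [| simpl; intuition |].
    + assert (H : In x (below (1/4) S)) by (apply In_below; split; [assumption | lra]).
      rewrite E1 in H. simpl in H |- *; intuition.
    + assert (Hx' : In x (above (1/4) S)) by (apply In_above; split; [assumption | lra]).
      destruct (Rtotal_order x (1/2)) as [Hx2|[->|Hx2]]; [| simpl; intuition |].
      * assert (H : In x (below (1/2) (above (1/4) S)))
          by (apply In_below; split; [assumption | lra]).
        rewrite E2 in H. simpl in H |- *; intuition.
      * assert (H : In x (above (1/2) (above (1/4) S)))
          by (apply In_above; split; [assumption | lra]).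
        rewrite E3 in H. simpl in H |- *; intuition.
  - assert (Ha : In a (below (1/4) S)) by (rewrite E1; left; reflexivity).
    assert (Hb : In b (below (1/2) (above (1/4) S))) by (rewrite E2; left; reflexivity).
    assert (Hc : In c (above (1/2) (above (1/4) S))) by (rewrite E3; left; reflexivity).
    assert (Hd : In d (above (1/2) (above (1/4) S))) by (rewrite E3; right; left; reflexivity).
    rewrite In_below in Ha, Hb. rewrite In_above in Hb, Hc, Hd. rewrite In_above in Hc, Hd.
    simpl. intros [<-|[<-|[<-|[<-|[<-|[<-|[]]]]]]]; tauto.
Qed.

Lemma segments_tight a b c d : a < 1/4 -> 1/4 < b < 1/2 -> 1/2 < c -> 1/2 < d ->
  local_distortion [1/4; a] 0 (1/4) + local_distortion [1/2; 1/4; b] (1/4) (1/2)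
  + local_distortion [1/2; c; d] (1/2) 1 <= 1777/691200 ->
  a = 1/12 /\ b = 3/8 /\ ((c = 7/10 /\ d = 9/10) \/ (c = 9/10 /\ d = 7/10)).
Proof.
  intros Ha Hb Hc Hd H.
  rewrite (local_distortion_same_set [1/2; 1/4; b] [1/4; b; 1/2]) in H
    by (discriminate || (intros x; simpl; tauto)).
  assert (B1 := local_distortion_ge_right 1 [1/4; a] 0 (1/4)
                  ltac:(lra) ltac:(simpl; auto) ltac:(simpl; lia)).
  assert (B2 := local_distortion_ge_inner 1 [1/4; b; 1/2] (1/4) (1/2)
                  ltac:(lra) ltac:(simpl; auto) ltac:(simpl; auto) ltac:(simpl; lia)).
  assert (B3 := local_distortion_ge_left 2 [1/2; c; d] (1/2) 1
                  ltac:(lra) ltac:(simpl; auto) ltac:(simpl; lia)).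
  unfold cell_error in B1, B2, B3. simpl INR in B1, B2, B3.
  split; [|split].
  - assert (Ta := one_point_right_tight 0 a (1/4) ltac:(lra) Ha ltac:(unfold cell_error; lra)). lra.
  - assert (Tb := midpoint_tight (1/4) b (1/2) Hb ltac:(unfold cell_error; lra)). lra.
  - destruct (two_points_left_tight (1/2) c d 1 ltac:(lra) Hc Hd ltac:(unfold cell_error; lra))
      as [[-> ->]|[-> ->]]; [left | right]; split; lra.
Qed.

Lemma distortion_ge_V6 S : In (1/4) S -> In (1/2) S -> (length S <= 6)%nat ->
  1777/691200 <= distortion S /\ (distortion S <= 1777/691200 -> same_set S alpha6).
Proof.
  intros H14 H12 Hlen.
  assert (Hdec := distortion_ge_segments S H14 H12).
  assert (Hcnt := segments_length S H14 H12).
  remember (below (1/4) S) as L eqn:EL.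
  remember (below (1/2) (above (1/4) S)) as M eqn:EM.
  remember (above (1/2) (above (1/4) S)) as R eqn:ER.
  assert (B1 := local_distortion_ge_right (length L) (1/4 :: L) 0 (1/4)
                  ltac:(lra) ltac:(simpl; auto) ltac:(simpl; lia)).
  assert (B2 := local_distortion_ge_inner (length M) (1/2 :: 1/4 :: M) (1/4) (1/2)
                  ltac:(lra) ltac:(simpl; auto) ltac:(simpl; auto) ltac:(simpl; lia)).
  assert (B3 := local_distortion_ge_left (length R) (1/2 :: R) (1/2) 1
                  ltac:(lra) ltac:(simpl; auto) ltac:(simpl; lia)).
  replace (1/4 - 0) with (1/4) in B1 by lra.
  replace (1/2 - 1/4) with (1/4) in B2 by lra.
  replace (1 - 1/2) with (1/2) in B3 by lra.
  destruct (three_segment_bound_min (length L) (length M) (length R) ltac:(lia)) as [Hmin Htight].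
  split; [lra|]. intros Hle.
  destruct (Htight ltac:(lra)) as [E1 [E2 E3]].
  destruct L as [|a [|]]; try discriminate E1.
  destruct M as [|b [|]]; try discriminate E2.
  destruct R as [|c [|d [|]]]; try discriminate E3.
  assert (Ha : a < 1/4) by (apply (In_below a (1/4) S); rewrite <- EL; simpl; auto).
  assert (Hb : 1/4 < b < 1/2).
  { assert (H : In b [b]) by (simpl; auto). rewrite EM, In_below, In_above in H. lra. }
  assert (Hc : 1/2 < c) by (apply (In_above c (1/2) (above (1/4) S)); rewrite <- ER; simpl; auto).
  assert (Hd : 1/2 < d) by (apply (In_above d (1/2) (above (1/4) S)); rewrite <- ER; simpl; auto).
  destruct (segments_tight a b c d Ha Hb Hc Hd ltac:(lra)) as [-> [-> Hcd]].
  intros x. rewrite (segments_same_set S _ _ c d H14 H12 (eq_sym EL) (eq_sym EM) (eq_sym ER) x).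
  unfold alpha6. destruct Hcd as [[-> ->]|[-> ->]]; simpl; tauto.
Qed.

Lemma sq_dist_le_on_segment x c p lo hi : lo <= x <= hi ->
  (lo - c) ^ 2 <= (lo - p) ^ 2 -> (hi - c) ^ 2 <= (hi - p) ^ 2 -> (x - c) ^ 2 <= (x - p) ^ 2.
Proof. intros Hx Hlo Hhi. destruct (Rle_dec p c); nra. Qed.

Lemma mind2_eq_on_cell S c lo hi x : In c S ->
  List.Forall (fun p => (lo - c) ^ 2 <= (lo - p) ^ 2 /\ (hi - c) ^ 2 <= (hi - p) ^ 2) S ->
  lo <= x <= hi -> mind2 x S = (x - c) ^ 2.
Proof.
  intros Hc Hcell Hx. rewrite Forall_forall in Hcell.
  apply Rle_antisym; [apply mind2_le_sq, Hc|].
  apply mind2_glb; [apply (In_not_nil _ _ Hc)|].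
  intros p Hp. apply (sq_dist_le_on_segment x c p lo hi Hx); apply Hcell, Hp.
Qed.

Lemma local_distortion_on_cell S c lo hi : In c S -> lo <= hi ->
  List.Forall (fun p => (lo - c) ^ 2 <= (lo - p) ^ 2 /\ (hi - c) ^ 2 <= (hi - p) ^ 2) S ->
  local_distortion S lo hi = ((hi - c) ^ 3 - (lo - c) ^ 3) / 3.
Proof.
  intros Hc Hlh Hcell. rewrite <- RInt_sq_dist. apply RInt_ext. intros x Hx.
  rewrite Rmin_left, Rmax_right in Hx by lra.
  apply (mind2_eq_on_cell S c lo hi); [exact Hc | exact Hcell | lra].
Qed.

Ltac solve_alpha6_cell :=
  unfold alpha6;
  match goal with
  | |- In _ _ => simpl; repeat first [left; reflexivity | right]
  | |- List.Forall _ _ =>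
      repeat apply Forall_cons; try apply Forall_nil; split; lra
  | |- _ => lra
  end.

Lemma distortion_alpha6 : distortion alpha6 = 1777/691200.
Proof.
  unfold distortion.
  rewrite (local_distortion_Chasles _ 0 (1/6) 1), (local_distortion_Chasles _ (1/6) (5/16) 1),
    (local_distortion_Chasles _ (5/16) (7/16) 1), (local_distortion_Chasles _ (7/16) (3/5) 1),
    (local_distortion_Chasles _ (3/5) (4/5) 1).
  rewrite (local_distortion_on_cell _ (1/12) 0 (1/6)),
    (local_distortion_on_cell _ (1/4) (1/6) (5/16)),
    (local_distortion_on_cell _ (3/8) (5/16) (7/16)),
    (local_distortion_on_cell _ (1/2) (7/16) (3/5)),
    (local_distortion_on_cell _ (7/10) (3/5) (4/5)),
    (local_distortion_on_cell _ (9/10) (4/5) 1) by solve_alpha6_cell.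
  field.
Qed.

Lemma voronoi_prob_of_cell b S lo hi : 0 <= lo <= hi -> hi <= 1 ->
  (forall x, 0 < x < lo -> mind2 x S < (x - b) ^ 2) ->
  (forall x, lo < x < hi -> (x - b) ^ 2 <= mind2 x S) ->
  (forall x, hi < x < 1 -> mind2 x S < (x - b) ^ 2) ->
  voronoi_prob b S = hi - lo.
Proof.
  intros Hlo Hhi Hleft Hcell Hright. unfold voronoi_prob.
  set (f := fun x => if Rle_dec ((x - b) ^ 2) (mind2 x S) then 1 else 0).
  change (RInt f 0 1 = hi - lo).
  assert (J1 : is_RInt f 0 lo (scal (lo - 0) 0)).
  { apply (@is_RInt_ext R_NormedModule (fun _ => 0)); [|apply (@is_RInt_const R_NormedModule)].
    intros x Hx. rewrite Rmin_left, Rmax_right in Hx by lra. unfold f.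
    destruct Rle_dec; [specialize (Hleft x Hx); lra | reflexivity]. }
  assert (J2 : is_RInt f lo hi (scal (hi - lo) 1)).
  { apply (@is_RInt_ext R_NormedModule (fun _ => 1)); [|apply (@is_RInt_const R_NormedModule)].
    intros x Hx. rewrite Rmin_left, Rmax_right in Hx by lra. unfold f.
    destruct Rle_dec as [|Hn]; [reflexivity | specialize (Hcell x Hx); lra]. }
  assert (J3 : is_RInt f hi 1 (scal (1 - hi) 0)).
  { apply (@is_RInt_ext R_NormedModule (fun _ => 0)); [|apply (@is_RInt_const R_NormedModule)].
    intros x Hx. rewrite Rmin_left, Rmax_right in Hx by lra. unfold f.
    destruct Rle_dec; [specialize (Hright x Hx); lra | reflexivity]. }
  rewrite (is_RInt_unique _ _ _ _
    (is_RInt_Chasles _ _ _ _ _ _ (is_RInt_Chasles _ _ _ _ _ _ J1 J2) J3)).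
  unfold plus, scal; simpl; unfold mult; simpl. ring.
Qed.

Lemma voronoi_prob_alpha6_quarter : voronoi_prob (1/4) alpha6 = 5/16 - 1/6.
Proof.
  apply voronoi_prob_of_cell; try lra; intros x Hx.
  - eapply Rle_lt_trans; [apply (mind2_le_sq x alpha6 (1/12)); solve_alpha6_cell | nra].
  - rewrite (mind2_eq_on_cell alpha6 (1/4) (1/6) (5/16) x) by (solve_alpha6_cell || lra). lra.
  - eapply Rle_lt_trans; [apply (mind2_le_sq x alpha6 (3/8)); solve_alpha6_cell | nra].
Qed.

Lemma voronoi_prob_alpha6_half : voronoi_prob (1/2) alpha6 = 3/5 - 7/16.
Proof.
  apply voronoi_prob_of_cell; try lra; intros x Hx.
  - eapply Rle_lt_trans; [apply (mind2_le_sq x alpha6 (3/8)); solve_alpha6_cell | nra].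
  - rewrite (mind2_eq_on_cell alpha6 (1/2) (7/16) (3/5) x) by (solve_alpha6_cell || lra). lra.
  - eapply Rle_lt_trans; [apply (mind2_le_sq x alpha6 (7/10)); solve_alpha6_cell | nra].
Qed.

Lemma distortion_quarter_half alpha : (length alpha <= 4)%nat ->
  1777/691200 <= distortion (alpha ++ [1/4; 1/2]) /\
  (distortion (alpha ++ [1/4; 1/2]) <= 1777/691200 -> same_set (alpha ++ [1/4; 1/2]) alpha6).
Proof.
  intros Hl.
  apply distortion_ge_V6; [apply in_or_app; simpl; auto .. | rewrite length_app; simpl; lia].
Qed.

Lemma Vn_6_quarter_half : Vn 6 [1/4; 1/2] = Finite (1777/691200).
Proof.
  apply is_glb_Rbar_unique. split.
  - intros v [alpha [Hl ->]]. apply distortion_quarter_half, Hl.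
  - intros m Hm. apply Hm. exists [1/12; 3/8; 7/10; 9/10]. split; [simpl; lia|].
    rewrite <- distortion_alpha6. apply local_distortion_same_set; [discriminate|].
    intros x; unfold alpha6; simpl; tauto.
Qed.

Theorem proposition3p5 :
  let beta := [1/4; 1/2] in
  let alpha6 := [1/12; 1/4; 3/8; 1/2; 7/10; 9/10] in
  cond_optimal_set 6 beta alpha6 /\
  (forall S, cond_optimal_set 6 beta S -> same_set S alpha6) /\
  Vn 6 beta = Finite (1777/691200).
Proof.
  intros beta alpha6'. change alpha6' with alpha6. unfold beta.
  split; [|split; [|exact Vn_6_quarter_half]].
  - split; [|split].
    + exists [1/12; 3/8; 7/10; 9/10]. split; [simpl; lia|]. intros x; unfold alpha6; simpl; tauto.
    + rewrite Vn_6_quarter_half, distortion_alpha6. reflexivity.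
    + intros b [<-|[<-|[]]];
        [rewrite voronoi_prob_alpha6_quarter | rewrite voronoi_prob_alpha6_half]; lra.
  - intros S [[alpha [Hl Hs]] [Hd _]].
    rewrite Vn_6_quarter_half in Hd. injection Hd as Hd.
    assert (HS : S <> []) by (apply (In_not_nil (1/4)), Hs, in_or_app; simpl; auto).
    unfold distortion in Hd. rewrite (local_distortion_same_set S _ 0 1 HS Hs) in Hd.
    destruct (distortion_quarter_half alpha Hl) as [_ Hopt].
    intros x. rewrite (Hs x). apply Hopt. unfold distortion. lra.
Qed.
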